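(* Let $K\subset\mathbb{R}^m$ be a pointed, closed, convex cone with nonempty interior which is finitely generated, let $C\subset\mathbb{R}^m$ be a finite set with $0\notin C$ and $K^*=\operatorname{cone}(\operatorname{conv}(C))$, and let $F:\mathbb{R}^n\to\mathbb{R}^m$ be continuously differentiable. Define $h(x,d)=\max\{\langle JF(x)d,w\rangle : w\in C\}$ and $v(x)=\arg\min_{d}\{h(x,d)+\tfrac12\|d\|^2\}$. Fix $0<\rho<\sigma<1$, $\mu>2$, and $e\in\operatorname{int}(K)$ with $\langle w,e\rangle\le1$ for all $w\in C$. Let $x^0\in\mathbb{R}^n$ and assume: (A1) there is an open set $\Lambda$ containing $\mathcal{L}=\{x: F(x)\preceq_K F(x^0)\}$ such that $\|JF(x)-JF(y)\|\le L\|x-y\|$ for all $x,y\in\Lambda$; (A2) every sequence $\{D_k\}\subset F(\mathcal{L})$ with $D_{k+1}\preceq_K D_k$ for all $k$ admits $D\in\mathbb{R}^m$ with $D\preceq_K D_k$ for all $k$. Let $\{x^k\}$ be an infinite sequence generated as follows: $d^0=v(x^0)$; for $k\ge1$, $d^k=v(x^k)+\beta_k d^{k-1}$ with $$\beta_k=\frac{-h(x^k,v(x^k))\big(|h(x^{k-1},v(x^k))|+h(x^{k-1},v(x^k))\big)}{\max\big\{\mu|h(x^k,d^{k-1})h(x^{k-1},v(x^k))|,\ -\mu h(x^{k-1},v(x^{k-1}))|h(x^{k-1},v(x^k))|\big\}};$$ $x^{k+1}=x^k+\alpha_kd^k$, where $\alpha_k>0$ satisfies the standard Wolfe conditions $$F(x^k+\alpha_kd^k)\preceq_K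 F(x^k)+\rho\alpha_k h(x^k,d^k)e,\qquad h(x^k+\alpha_kd^k,d^k)\ge\sigma h(x^k,d^k).$$ Then $$\sum_{k\ge0}\frac{h^2(x^k,d^k)}{\|d^k\|^2}<\infty.$$
   Context: $u\preceq_K v$ means $v-u\in K$. $K^*$ is the positive polar cone of $K$ and $JF$ the Jacobian of $F$. The sequence is assumed infinite, i.e. $v(x^k)\neq0$ for all $k$ (equivalently no $x^k$ is a $K$-Pareto critical point). *)

From HB Require Import structures.
From mathcomp Require Import all_boot all_order all_algebra.
From mathcomp Require Import all_classical all_reals all_analysis.
Set Implicit Arguments. Unset Strict Implicit. Unset Printing Implicit Defensive.
Import Order.TTheory GRing.Theory Num.Theory.
Import numFieldNormedType.Exports.
Local Open Scope classical_set_scope.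
Local Open Scope ring_scope.

Definition dotv (R : realType) (p : nat) (u w : 'cV[R]_p) : R :=
  \sum_(i < p) u i 0 * w i 0.

Definition leK (R : realType) (p : nat) (K : set 'cV[R]_p) (u w : 'cV[R]_p) : Prop :=
  K (w - u).

Definition convex_cone (R : realType) (p : nat) (K : set 'cV[R]_p) : Prop :=
  K 0 /\ (forall u w, K u -> K w -> K (u + w)) /\
  (forall (t : R) u, 0 <= t -> K u -> K (t *: u)).

Definition pointed_cone (R : realType) (p : nat) (K : set 'cV[R]_p) : Prop :=
  forall u, K u -> K (- u) -> u = 0.

Definition conic_hull (R : realType) (p : nat) (G : seq 'cV[R]_p) : set 'cV[R]_p :=
  [set u | exists t : nat -> R, (forall i, 0 <= t i) /\
           u = \sum_(i < size G) t i *: G`_i].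

Definition finitely_generated (R : realType) (p : nat) (K : set 'cV[R]_p) : Prop :=
  exists G : seq 'cV[R]_p, K = conic_hull G.

Definition polar_cone (R : realType) (p : nat) (K : set 'cV[R]_p) : set 'cV[R]_p :=
  [set w | forall u, K u -> 0 <= dotv w u].

Definition conv_hull (R : realType) (p : nat) (C : seq 'cV[R]_p) : set 'cV[R]_p :=
  [set u | exists t : nat -> R, (forall i, 0 <= t i) /\
           \sum_(i < size C) t i = 1 /\ u = \sum_(i < size C) t i *: C`_i].

Definition cone_of (R : realType) (p : nat) (A : set 'cV[R]_p) : set 'cV[R]_p :=
  [set u | exists (t : R) a, 0 <= t /\ A a /\ u = t *: a].

(* h(x, d) = max { <JF(x) d, w> : w in C }  (C is nonempty under the hypotheses) *)
Definition hfun (R : realType) (n m : nat) (J : 'cV[R]_n -> 'M[R]_(m, n))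
  (C : seq 'cV[R]_m) (x d : 'cV[R]_n) : R :=
  \big[Num.max/dotv (J x *m d) (head 0 C)]_(w <- C) dotv (J x *m d) w.

Definition is_v (R : realType) (n m : nat) (J : 'cV[R]_n -> 'M[R]_(m, n))
  (C : seq 'cV[R]_m) (x u : 'cV[R]_n) : Prop :=
  forall d : 'cV[R]_n,
    hfun J C x u + dotv u u / 2 <= hfun J C x d + dotv d d / 2.

From HB Require Import structures.
From mathcomp Require Import all_boot all_order all_algebra.
From mathcomp Require Import all_classical all_reals all_analysis.
From mathcomp Require Import ring lra.
Import Order.TTheory GRing.Theory Num.Theory.
Import numFieldNormedType.Exports.
Local Open Scope classical_set_scope.
Local Open Scope ring_scope.
Set Implicit Arguments. Unset Strict Implicit.

(* Scalarize with a fixed w0 in C, which lies in K^* and has <w0, e> > 0: the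
   first Wolfe condition makes phi_k = <w0, F(x^k)> decrease by at least
   rho <w0, e> alpha_k |h(x^k, d^k)|, and (A2) bounds phi_k from below.  The
   choice of beta_k keeps every d^k a descent direction, and the curvature
   condition together with the Lipschitz continuity of JF gives
   (1 - sigma) |h(x^k, d^k)| <= Q alpha_k ||d^k||^2 for a constant Q.  Multiplying the two
   estimates bounds each term h^2/||d||^2 by a multiple of phi_k - phi_(k+1),
   and the sum telescopes. *)

Section InnerProduct.
Variables (R : realType) (p : nat).
Implicit Types u a b : 'cV[R]_p.

Lemma dotvDl u a b : dotv (a + b) u = dotv a u + dotv b u.
Proof. by rewrite /dotv -big_split; apply: eq_bigr => i _; rewrite mxE mulrDl. Qed.

Lemma dotvDr u a b : dotv u (a + b) = dotv u a + dotv u b.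
Proof. by rewrite /dotv -big_split; apply: eq_bigr => i _; rewrite mxE mulrDr. Qed.

Lemma dotvZl u a t : dotv (t *: a) u = t * dotv a u.
Proof. by rewrite /dotv mulr_sumr; apply: eq_bigr => i _; rewrite mxE mulrA. Qed.

Lemma dotvZr u a t : dotv u (t *: a) = t * dotv u a.
Proof. by rewrite /dotv mulr_sumr; apply: eq_bigr => i _; rewrite mxE mulrCA. Qed.

Lemma dotvBr u a b : dotv u (a - b) = dotv u a - dotv u b.
Proof. by rewrite dotvDr -scaleN1r dotvZr mulN1r. Qed.

Lemma dotv0l u : dotv 0 u = 0.
Proof. by rewrite /dotv big1 // => i _; rewrite mxE mul0r. Qed.

Lemma dotv_ge0 u : 0 <= dotv u u.
Proof. by rewrite /dotv sumr_ge0 // => i _; rewrite -expr2 sqr_ge0. Qed.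

Lemma mx_normr_coef_le q r (M : 'M[R]_(q, r)) i j : `|M i j| <= `|M|.
Proof. by rewrite [leRHS]/Num.Def.normr /= mx_normrE; exact: (le_bigmax _ _ (i, j)). Qed.

Lemma mx_normr_le q r (M : 'M[R]_(q, r)) c :
  0 <= c -> (forall i j, `|M i j| <= c) -> `|M| <= c.
Proof. by move=> c0 Mc; rewrite /Num.Def.normr /= mx_normrE bigmax_le // => -[]. Qed.

Lemma normr_dotv_le a b : `|dotv a b| <= p%:R * (`|a| * `|b|).
Proof.
rewrite /dotv (le_trans (ler_norm_sum _ _ _)) //.
rewrite mulr_natl -[X in _ *+ X]card_ord -sumr_const; apply: ler_sum => i _.
by rewrite normrM ler_pM // mx_normr_coef_le.
Qed.

Lemma normr_mulmx_le q (M : 'M[R]_(q, p)) u : `|M *m u| <= p%:R * (`|M| * `|u|).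
Proof.
apply: mx_normr_le => [|i j]; first by rewrite !mulr_ge0.
rewrite mxE (le_trans (ler_norm_sum _ _ _)) //.
rewrite mulr_natl -[X in _ *+ X]card_ord -sumr_const; apply: ler_sum => k _.
by rewrite normrM ler_pM // mx_normr_coef_le.
Qed.

(* [`|u|] is the max norm, which is dominated by the Euclidean one. *)
Lemma sqr_normr_le_dotv u : `|u| ^+ 2 <= dotv u u.
Proof.
have uS : `|u| <= Num.sqrt (dotv u u).
  apply: mx_normr_le => [|i j]; first exact: sqrtr_ge0.
  rewrite (ord1 j) -sqrtr_sqr ler_wsqrtr // /dotv (bigD1 i) //= -expr2 lerDl.
  by rewrite sumr_ge0 // => k _; rewrite -expr2 sqr_ge0.
by rewrite -(sqr_sqrtr (dotv_ge0 u)) lerXn2r // ?nnegrE ?sqrtr_ge0.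
Qed.

Lemma dotv_gt0 u : u != 0 -> 0 < dotv u u.
Proof.
by move=> u0; apply: lt_le_trans (sqr_normr_le_dotv u); rewrite exprn_gt0 ?normr_gt0.
Qed.

End InnerProduct.

Section Cones.
Variables (R : realType) (p : nat) (K : set 'cV[R]_p).

Lemma polar_leK w a b : polar_cone K w -> leK K a b -> dotv w a <= dotv w b.
Proof. by move=> Kw /Kw; rewrite dotvBr subr_ge0. Qed.

Lemma polar_interior_gt0 w e :
  polar_cone K w -> w != 0 -> interior K e -> 0 < dotv w e.
Proof.
move=> Kw w0 /nbhs_ballP[eps eps0 ballK].
have nw0 : 0 < `|w| by rewrite normr_gt0.
set t := eps / (2 * `|w|).
have t0 : 0 < t by rewrite divr_gt0 // mulr_gt0.
have /Kw : K (e - t *: w).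
  apply: ballK; rewrite -ball_normE /= opprB addrC subrK normrZ gtr0_norm //.
  have -> : t * `|w| = eps / 2 by rewrite /t; field; rewrite gt_eqF.
  by rewrite ltr_pdivrMr // ltr_pMr // ltr1n.
rewrite dotvBr dotvZr.
have : 0 < t * dotv w w by rewrite mulr_gt0 // dotv_gt0.
lra.
Qed.

Hypothesis Kcone : convex_cone K.

Lemma leK_trans a b c : leK K a b -> leK K b c -> leK K a c.
Proof.
case: Kcone => _ [Kadd _] ab bc.
rewrite /leK; have -> : c - a = (c - b) + (b - a) by rewrite addrA subrK.
exact: Kadd.
Qed.

Lemma leK_chain (u : nat -> 'cV[R]_p) :
  (forall k, leK K (u k.+1) (u k)) -> forall k, leK K (u k) (u 0).
Proof.
move=> u_dec; elim=> [|k IH]; first by rewrite /leK subrr; case: Kcone.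
exact: leK_trans (u_dec k) IH.
Qed.

Lemma leK_addr_nonpos a b e t : K e -> t <= 0 -> leK K a (b + t *: e) -> leK K a b.
Proof.
case: Kcone => _ [Kadd Kscale] Ke t0 abe.
have /(Kadd _ _ abe) : K (- t *: e) by apply: Kscale; rewrite // oppr_ge0.
by rewrite scaleNr addrAC addrK.
Qed.

End Cones.

Section ConvHull.
Variables (R : realType) (p : nat) (C : seq 'cV[R]_p).

Lemma conv_hull_neq_nil u : conv_hull C u -> C != [::].
Proof. by case=> t [_ []]; case: C => //=; rewrite big_ord0 => /esym/eqP; rewrite oner_eq0. Qed.

Lemma mem_conv_hull w : w \in C -> conv_hull C w.
Proof.
move=> wC; have iC : (index w C < size C)%N by rewrite index_mem.
pose i0 : 'I_(size C) := Ordinal iC.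
exists (fun i => (i == index w C)%:R); split=> [i|]; first exact: ler0n.
have ne0 (i : 'I_(size C)) : i != i0 -> (i == index w C :> nat) = false.
  by rewrite -val_eqE => /negbTE.
split.
  by rewrite (bigD1 i0) // big1 => [|i /ne0 ->] //=; rewrite eqxx addr0.
rewrite (bigD1 i0) // big1 => [|i /ne0 ->] /=; last by rewrite scale0r.
by rewrite eqxx scale1r addr0 nth_index.
Qed.

Variable K : set 'cV[R]_p.
Hypothesis Kpol : polar_cone K = cone_of (conv_hull C).

Lemma polar_conv_hull_neq_nil : C != [::].
Proof.
have : polar_cone K 0 by move=> u _; rewrite dotv0l.
by rewrite Kpol => -[t [a [_ [/conv_hull_neq_nil]]]].
Qed.

Lemma polar_interior_witness e :
  0 \notin C -> interior K e -> exists2 w, polar_cone K w & 0 < dotv w e.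
Proof.
move=> C0 eK; have [w wC] : exists w, w \in C.
  by case: C polar_conv_hull_neq_nil => [|w s] // _; exists w; rewrite mem_head.
have Kw : polar_cone K w.
  by rewrite Kpol; exists 1, w; rewrite scale1r; split=> //; split=> //; apply: mem_conv_hull.
have w0 : w != 0 by apply: contraNneq C0 => <-.
by exists w; last exact: polar_interior_gt0 Kw w0 eK.
Qed.

End ConvHull.

Section SupportFunction.
Variables (R : realType) (n m : nat) (J : 'cV[R]_n -> 'M[R]_(m, n)) (C : seq 'cV[R]_m).

Lemma hfun0 x : hfun J C x 0 = 0.
Proof.
rewrite /hfun mulmx0 dotv0l.
by elim: C => [|w s IH]; rewrite ?big_nil // big_cons dotv0l IH maxxx.
Qed.

Lemma hfun_le0_is_v x u : is_v J C x u -> hfun J C x u <= 0.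
Proof.
move=> /(_ 0); rewrite hfun0 dotv0l mul0r addr0.
by have := dotv_ge0 u; lra.
Qed.

Lemma hfun_ge x u w : w \in C -> dotv (J x *m u) w <= hfun J C x u.
Proof. by move=> wC; apply: le_bigmax_seq. Qed.

Hypothesis C_neq_nil : C != [::].

Lemma hfun_le x u c : (forall w, w \in C -> dotv (J x *m u) w <= c) -> hfun J C x u <= c.
Proof.
move=> uc; rewrite /hfun big_seq; apply: bigmax_le => [|w /uc //].
by apply: uc; case: C C_neq_nil => // w s _; rewrite mem_head.
Qed.

Lemma hfun_subadd x a b : hfun J C x (a + b) <= hfun J C x a + hfun J C x b.
Proof. by apply: hfun_le => w wC; rewrite mulmxDr dotvDl lerD ?hfun_ge. Qed.

Lemma hfun_scale x a t : 0 <= t -> hfun J C x (t *: a) <= t * hfun J C x a.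
Proof.
by move=> t0; apply: hfun_le => w wC; rewrite -scalemxAr dotvZl ler_wpM2l ?hfun_ge.
Qed.

Lemma hfun_lipschitz W x y u : (forall w, w \in C -> `|w| <= W) ->
  hfun J C y u <= hfun J C x u + m%:R * (n%:R * (`|J y - J x| * `|u|) * W).
Proof.
move=> CW; apply: hfun_le => w wC.
have -> : J y *m u = J x *m u + (J y - J x) *m u by rewrite mulmxBl addrC subrK.
rewrite dotvDl lerD ?hfun_ge //.
apply: le_trans (ler_norm _) _; apply: le_trans (normr_dotv_le _ _) _.
by rewrite ler_wpM2l // ler_pM // ?normr_mulmx_le ?CW.
Qed.

Lemma hfun_step_le W L x y u a :
  0 <= W -> (forall w, w \in C -> `|w| <= W) -> 0 <= a ->
  `|J y - J x| <= L * `|y - x| -> y - x = a *: u ->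
  hfun J C y u <= hfun J C x u + m%:R * n%:R * W * `|L| * a * dotv u u.
Proof.
move=> W0 CW a0 JL yx; apply: le_trans (hfun_lipschitz x y u CW) _.
rewrite lerD2l; have JuL : `|J y - J x| * `|u| <= `|L| * a * dotv u u.
  rewrite yx normrZ ger0_norm // in JL.
  apply: le_trans (ler_wpM2r (normr_ge0 u) JL) _.
  apply: le_trans (ler_wpM2r (normr_ge0 u) (ler_wpM2r _ (ler_norm L))) _.
    by rewrite mulr_ge0.
  rewrite -!mulrA ler_wpM2l // ler_wpM2l // -expr2; exact: sqr_normr_le_dotv.
have -> : m%:R * n%:R * W * `|L| * a * dotv u u =
    m%:R * (n%:R * (`|L| * a * dotv u u) * W) by ring.
by rewrite ler_wpM2l // ler_wpM2r // ler_wpM2l.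
Qed.

End SupportFunction.

Lemma cg_beta_ge0 (R : realType) (mu hv a b c : R) : 2 <= mu -> hv <= 0 ->
  0 <= - hv * (`|a| + a) / Num.max (mu * `|b * a|) c.
Proof.
move=> mu_ge2 hv_le0.
have a_ge : 0 <= `|a| + a by have := ler_norm (- a); rewrite normrN; lra.
by rewrite divr_ge0 ?mulr_ge0 ?oppr_ge0 // le_max mulr_ge0 // (le_trans _ mu_ge2).
Qed.

(* Since |a| + a <= 2 |a|, the choice mu >= 2 keeps the numerator below
   -hv times the first entry of the max. *)
Lemma cg_beta_normr_le (R : realType) (mu hv a b c : R) : 2 <= mu -> hv <= 0 ->
  - hv * (`|a| + a) / Num.max (mu * `|b * a|) c * `|b| <= - hv.
Proof.
move=> mu_ge2 hv_le0; set D := Num.max _ c.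
have muD : mu * `|b * a| <= D by rewrite le_max lexx.
have [->|D_neq0] := eqVneq D 0; first by rewrite invr0 mulr0 mul0r oppr_ge0.
have D_gt0 : 0 < D.
  by rewrite lt_def D_neq0 (le_trans _ muD) // mulr_ge0 // (le_trans _ mu_ge2).
have ab : (`|a| + a) * `|b| <= mu * `|b * a|.
  have := ler_norm a; have := normr_ge0 a; have := normr_ge0 b.
  have : 0 <= `|b| * `|a| by rewrite mulr_ge0.
  rewrite normrM; nra.
rewrite mulrAC ler_pdivrMr // -mulrA ler_wpM2l ?oppr_ge0 //.
exact: le_trans ab muD.
Qed.

Section ConjugateDirections.
Variables (R : realType) (n m : nat) (J : 'cV[R]_n -> 'M[R]_(m, n)) (C : seq 'cV[R]_m).
Variables (mu : R) (x v d : nat -> 'cV[R]_n) (beta : nat -> R).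
Hypotheses (C_neq_nil : C != [::]) (mu_ge2 : 2 <= mu).
Hypotheses (v_is_v : forall k, is_v J C (x k) (v k)) (d0 : d 0 = v 0).
Hypothesis beta_def : forall k, beta k.+1 =
  - hfun J C (x k.+1) (v k.+1) *
    (`|hfun J C (x k) (v k.+1)| + hfun J C (x k) (v k.+1)) /
  Num.max (mu * `|hfun J C (x k.+1) (d k) * hfun J C (x k) (v k.+1)|)
          (- mu * hfun J C (x k) (v k) * `|hfun J C (x k) (v k.+1)|).
Hypothesis d_rec : forall k, d k.+1 = v k.+1 + beta k.+1 *: d k.

Lemma cg_descent k : hfun J C (x k) (d k) <= 0.
Proof.
case: k => [|k]; first by rewrite d0; apply: hfun_le0_is_v.
have hv_le0 := hfun_le0_is_v (v_is_v k.+1).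
have beta_ge0 : 0 <= beta k.+1 by rewrite beta_def cg_beta_ge0.
have beta_le : beta k.+1 * `|hfun J C (x k.+1) (d k)| <= - hfun J C (x k.+1) (v k.+1).
  by rewrite beta_def cg_beta_normr_le.
have := hfun_scale J C_neq_nil (x k.+1) (d k) beta_ge0.
have := ler_wpM2l beta_ge0 (ler_norm (hfun J C (x k.+1) (d k))).
rewrite d_rec; have := hfun_subadd J C_neq_nil (x k.+1) (v k.+1) (beta k.+1 *: d k).
lra.
Qed.

End ConjugateDirections.

Lemma bounded_nneseries_lty (R : realType) (f : nat -> R) (B : R) :
  (forall k, 0 <= f k) -> (forall N, \sum_(0 <= k < N) f k <= B) ->
  (\sum_(0 <= k <oo) (f k)%:E < +oo)%E.
Proof.
move=> f0 fB; apply: (@le_lt_trans _ _ B%:E); last exact: ltry.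
apply: lime_le; first by apply: is_cvg_nneseries => k _ _; rewrite lee_fin.
by apply: nearW => N; rewrite sumEFin lee_fin.
Qed.

Section Zoutendijk.
Variables (R : realType) (g q alpha phi : nat -> R) (c s Q lb : R).
Hypotheses (c_gt0 : 0 < c) (s_gt0 : 0 < s) (Q_ge0 : 0 <= Q).
Hypotheses (g_le0 : forall k, g k <= 0) (q_ge0 : forall k, 0 <= q k).
Hypothesis alpha_ge0 : forall k, 0 <= alpha k.
Hypothesis sufficient_decrease : forall k, phi k.+1 <= phi k + c * alpha k * g k.
Hypothesis curvature : forall k, s * - g k <= Q * alpha k * q k.
Hypothesis phi_ge_lb : forall k, lb <= phi k.

Lemma zoutendijk_step k : c * s * (g k ^+ 2 / q k) <= Q * (phi k - phi k.+1).
Proof.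
have cag : c * alpha k * g k <= 0 by rewrite mulr_ge0_le0 // mulr_ge0 // ltW.
have dec := sufficient_decrease k.
have [->|q_neq0] := eqVneq (q k) 0; first by rewrite invr0 !mulr0 mulr_ge0 //; lra.
have q_gt0 : 0 < q k by rewrite lt_def q_neq0 q_ge0.
have sgq : s * - g k / q k <= Q * alpha k by rewrite ler_pdivrMr.
have -> : c * s * (g k ^+ 2 / q k) = c * - g k * (s * - g k / q k) by ring.
apply: le_trans (ler_wpM2l _ sgq) _; first by rewrite mulr_ge0 ?oppr_ge0 // ltW.
have -> : c * - g k * (Q * alpha k) = Q * - (c * alpha k * g k) by ring.
by rewrite ler_wpM2l //; lra.
Qed.

Theorem zoutendijk : (\sum_(0 <= k <oo) (g k ^+ 2 / q k)%:E < +oo)%E.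
Proof.
apply: (@bounded_nneseries_lty _ _ (Q * (phi 0 - lb) / (c * s))) => [k|N].
  by rewrite divr_ge0 ?sqr_ge0.
rewrite ler_pdivlMr ?mulr_gt0 // mulrC.
have : c * s * \sum_(0 <= k < N) (g k ^+ 2 / q k) <= Q * (phi 0 - phi N).
  elim: N => [|N IH]; first by rewrite big_geq // mulr0 subrr mulr0.
  by rewrite big_nat_recr //= mulrDr; have := zoutendijk_step N; lra.
by move/le_trans; apply; rewrite ler_wpM2l // lerD2l lerN2.
Qed.

End Zoutendijk.

Theorem mainTheorem2 (R : realType) (n m : nat)
  (K : set 'cV[R]_m) (C : seq 'cV[R]_m)
  (F : 'cV[R]_n -> 'cV[R]_m) (J : 'cV[R]_n -> 'M[R]_(m, n))
  (rho sigma mu : R) (e : 'cV[R]_m)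
  (x d v : nat -> 'cV[R]_n) (alpha beta : nat -> R) :
  (* the cone K *)
  convex_cone K -> pointed_cone K -> closed K -> interior K !=set0 ->
  finitely_generated K ->
  (* the finite set C *)
  0 \notin C -> polar_cone K = cone_of (conv_hull C) ->
  (* F continuously differentiable with Jacobian J *)
  (forall z, differentiable F z) -> (forall z u, 'd F z u = J z *m u) ->
  continuous J ->
  (* parameters *)
  0 < rho -> rho < sigma -> sigma < 1 -> 2 < mu ->
  interior K e -> (forall w, w \in C -> dotv w e <= 1) ->
  (* (A1) *)
  (exists (Lam : set 'cV[R]_n) (L : R), open Lam /\
     [set z | leK K (F z) (F (x 0))] `<=` Lam /\
     (forall y z, Lam y -> Lam z -> `|J y - J z| <= L * `|y - z|)) ->
  (* (A2) *)
  (forall D : nat -> 'cV[R]_m,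
     (forall k, exists z, leK K (F z) (F (x 0)) /\ D k = F z) ->
     (forall k, leK K (D k.+1) (D k)) ->
     exists D0, forall k, leK K D0 (D k)) ->
  (* the algorithm *)
  (forall k, is_v J C (x k) (v k)) ->
  (forall k, v k != 0) ->
  d 0 = v 0 ->
  (forall k, beta k.+1 =
     - hfun J C (x k.+1) (v k.+1) *
       (`|hfun J C (x k) (v k.+1)| + hfun J C (x k) (v k.+1)) /
     Num.max (mu * `|hfun J C (x k.+1) (d k) * hfun J C (x k) (v k.+1)|)
             (- mu * hfun J C (x k) (v k) * `|hfun J C (x k) (v k.+1)|)) ->
  (forall k, d k.+1 = v k.+1 + beta k.+1 *: d k) ->
  (forall k, 0 < alpha k) ->
  (forall k, x k.+1 = x k + alpha k *: d k) ->
  (forall k, leK K (F (x k + alpha k *: d k))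
                   (F (x k) + (rho * alpha k * hfun J C (x k) (d k)) *: e)) ->
  (forall k, hfun J C (x k + alpha k *: d k) (d k) >= sigma * hfun J C (x k) (d k)) ->
  (\sum_(0 <= k <oo) ((hfun J C (x k) (d k)) ^+ 2 / dotv (d k) (d k))%:E < +oo)%E.
Proof.
move=> Kcone _ _ _ _ C0 Kpol _ _ _ rho_gt0 rho_lt_sigma sigma_lt1 mu_gt2 eK _
  [Lam [L [_ [LamL JL]]]] A2 v_is_v _ d0 beta_def d_rec alpha_gt0 x_rec wolfe1 wolfe2.
have C_neq_nil := polar_conv_hull_neq_nil Kpol.
have [w Kw we_gt0] := polar_interior_witness Kpol C0 eK.
have g_le0 := cg_descent C_neq_nil (ltW mu_gt2) v_is_v d0 beta_def d_rec.
have F_dec k : leK K (F (x k.+1)) (F (x k)).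
  rewrite x_rec; apply: (leK_addr_nonpos Kcone _ _ (wolfe1 k)); first exact: nbhs_singleton.
  by rewrite mulr_ge0_le0 // mulr_ge0 // ltW.
have F_le k : leK K (F (x k)) (F (x 0)) := leK_chain Kcone F_dec k.
have [D0 D0_le] := A2 (F \o x) (fun k => ex_intro _ (x k) (conj (F_le k) erefl)) F_dec.
pose W := \big[Num.max/0]_(u <- C) `|u|.
have W_ge0 : 0 <= W := bigmax_ge_id _ _ _ _.
have CW u : u \in C -> `|u| <= W by move=> uC; apply: le_bigmax_seq.
apply: (@zoutendijk _ _ _ alpha (fun k => dotv w (F (x k)))
  (rho * dotv w e) (1 - sigma) (m%:R * n%:R * W * `|L|) (dotv w D0)) => [||||k|k|k|k|k].
- by rewrite mulr_gt0.
- by rewrite subr_gt0.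
- by rewrite !mulr_ge0.
- exact: g_le0.
- exact: dotv_ge0.
- exact: ltW.
- by have := polar_leK Kw (wolfe1 k); rewrite -x_rec dotvDr dotvZr; lra.
- have x_step : x k.+1 - x k = alpha k *: d k by rewrite x_rec addrAC subrr add0r.
  have := hfun_step_le C_neq_nil W_ge0 CW (ltW (alpha_gt0 k)) (JL _ _ (LamL _ (F_le k.+1)) (LamL _ (F_le k))) x_step.
  by have := wolfe2 k; rewrite -x_rec; lra.
- exact: polar_leK Kw (D0_le k).
Qed.
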